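(* Let $\varphi_1$ and $\varphi_2$ be two $\mathbb{T}$-gains on a connected graph $G$ with $n$ vertices and $m$ edges. Let $T$ be a normal spanning tree of $G$ such that $\varphi_1(\overrightarrow{C_j(T)})=\varphi_2(\overrightarrow{C_j(T)})$ for all $j=1,\dots,m-n+1$. Then $A(\Phi_1)$ and $A(\Phi_2)$ have the same spectrum, i.e. $\Phi_1=(G,\varphi_1)$ and $\Phi_2=(G,\varphi_2)$ are $\mathbb{T}$-cospectral.
   Context: Graphs are finite, simple and undirected, $V(G)=\{v_1,\dots,v_n\}$. $\mathbb{T}=\{z\in\mathbb{C}:|z|=1\}$. A $\mathbb{T}$-gain on $G$ is a map $\varphi$ from oriented edges to $\mathbb{T}$ with $\varphi(\overrightarrow{e_{ts}})=\varphi(\overrightarrow{e_{st}})^{-1}$; $\Phi=(G,\varphi)$ is a $\mathbb{T}$-gain graph, with adjacency matrix $A(\Phi)$ the $n\times n$ Hermitian matrix whose $(s,t)$ entry is $\varphi(\overrightarrow{e_{st}})$ if $v_s\sim v_t$ and $0$ otherwise. Two $\mathbb{T}$-gain graphs are $\mathbb{T}$-cospectral if their adjacency matrices have the same spectrum. The gain of a directed cycle is the product of gains of its oriented edges. A rooted spanning tree $T$ with root $v_r$ induces the tree order ($v_x\le v_y$ iff $v_x$ lies on the $T$-path from $v_r$ to $v_y$); $T$ is normal if adjacent vertices of $G$ are always comparable. The suitably oriented graph $\overrightarrow{G_T}$ orients each edge $e_{st}$ with $v_s\le v_t$ as $\overrightarrow{e_{st}}$ if $e_{st}\in E(T)$ and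 as $\overrightarrow{e_{ts}}$ otherwise. Each of the $m-n+1$ non-tree edges creates a unique fundamental cycle with $T$, a directed cycle $\overrightarrow{C_j(T)}$ in $\overrightarrow{G_T}$. *)

From HB Require Import structures.
From mathcomp Require Import all_boot all_order all_algebra.
From mathcomp Require Import complex.
From mathcomp Require Import reals.
Set Implicit Arguments. Unset Strict Implicit. Unset Printing Implicit Defensive.
Import Order.TTheory GRing.Theory Num.Theory.
Local Open Scope ring_scope.

(* Simple graphs on the vertex set 'I_n (vertex v_i is the ordinal i),
   given by an adjacency relation e. *)
Definition simple_graph (n : nat) (e : rel 'I_n) : Prop :=
  irreflexive e /\ symmetric e.

Definition connected_graph (n : nat) (e : rel 'I_n) : Prop :=
  forall x y : 'I_n, connect e x y.

(* A T-gain: phi s t is the gain of the oriented edge e_st (from v_s to v_t);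
   it has modulus 1 and phi t s = (phi s t)^-1 on every edge.
   Values on non-adjacent pairs are irrelevant. *)
Definition T_gain (R : realType) (n : nat) (e : rel 'I_n)
  (phi : 'I_n -> 'I_n -> R[i]) : Prop :=
  forall s t, e s t -> `|phi s t| = 1 /\ phi t s = (phi s t)^-1.

Definition gain_adj (R : realType) (n : nat) (e : rel 'I_n)
  (phi : 'I_n -> 'I_n -> R[i]) : 'M[R[i]]_n :=
  \matrix_(s, t) (if e s t then phi s t else 0).

(* Acyclic: no (simple) cycle x, p_1, ..., p_k, x with k >= 2 distinct
   vertices (simple graph, so cycles have length >= 3). *)
Definition acyclic (n : nat) (tr : rel 'I_n) : Prop :=
  forall (x : 'I_n) (p : seq 'I_n),
    (1 < size p)%N -> path tr x p -> uniq (x :: p) -> ~~ tr (last x p) x.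

Definition spanning_tree (n : nat) (e tr : rel 'I_n) : Prop :=
  symmetric tr /\ subrel tr e /\ connected_graph tr /\ acyclic tr.

(* Tree order of the rooted spanning tree (tr, r):
   x <= y iff x lies on the tree path from the root r to y. *)
Definition tree_le (n : nat) (tr : rel 'I_n) (r x y : 'I_n) : Prop :=
  exists p : seq 'I_n,
    [/\ path tr r p, uniq (r :: p), last r p = y & x \in r :: p].

Definition normal_tree (n : nat) (e tr : rel 'I_n) (r : 'I_n) : Prop :=
  forall x y, e x y -> tree_le tr r x y \/ tree_le tr r y x.

Fixpoint walk_gain (R : realType) (n : nat) (phi : 'I_n -> 'I_n -> R[i])
  (x : 'I_n) (p : seq 'I_n) : R[i] :=
  match p with
  | [::] => 1
  | y :: p' => phi x y * walk_gain phi y p'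
  end.

(* Gain of the fundamental directed cycle C(T) created by the non-tree edge
   {v_s, v_t} with v_s <= v_t in the suitably oriented graph: the tree path
   from v_s down to v_t (tree edges oriented away from the root), followed by
   the non-tree edge oriented e_ts.  Here p is the tree path s, p_1, ..., t. *)
Definition fund_cycle_gain (R : realType) (n : nat)
  (phi : 'I_n -> 'I_n -> R[i]) (s t : 'I_n) (p : seq 'I_n) : R[i] :=
  walk_gain phi s p * phi t s.

From HB Require Import structures.
From mathcomp Require Import all_boot all_order all_algebra.
From mathcomp Require Import complex.
From mathcomp Require Import reals.
From mathcomp Require Import ring zify.
Set Implicit Arguments. Unset Strict Implicit. Unset Printing Implicit Defensive.
Import Order.TTheory GRing.Theory Num.Theory.
Local Open Scope ring_scope.

(* Let g_k(v) be the phi_k-gain of the tree path from the root r to v, and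
   d(v) = g_2(v) / g_1(v).  Along a tree edge the root path of one endpoint
   extends that of the other, so phi_2(e_uv) = d(u)^-1 phi_1(e_uv) d(v).  By
   normality a non-tree edge joins comparable vertices, hence closes a
   fundamental cycle with the tree path between them; equal cycle gains and
   telescoping d along that path give the same relation.  Thus
   A(Phi_2) = D^-1 A(Phi_1) D with D = diag(d), and conjugate matrices have
   the same characteristic polynomial. *)

Section TreePaths.
Variables (n : nat) (tr : rel 'I_n).

Definition tree_path (x y : 'I_n) (p : seq 'I_n) : bool :=
  [&& path tr x p, uniq (x :: p) & last x p == y].

Lemma tree_pathP x y p :
  reflect [/\ path tr x p, uniq (x :: p) & last x p = y] (tree_path x y p).
Proof. by apply: (iffP and3P) => -[? ? /eqP]. Qed.

Lemma connect_tree_path x y : connect tr x y -> exists p, tree_path x y p.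
Proof.
case/connectP => p /shortenP[q qP qU _] ->.
by exists q; apply/tree_pathP.
Qed.

Lemma tree_path_prefix x y p q :
  tree_path x y (p ++ q) -> tree_path x (last x p) p.
Proof.
case/and3P; rewrite cat_path -cat_cons cat_uniq => /andP[pP _] /and3P[pU _ _] _.
by apply/and3P.
Qed.

Lemma tree_path_cons x y a p : tree_path x y (a :: p) -> tree_path a y p.
Proof. by case/and3P => /andP[_ ?] /andP[_ ?] ?; apply/and3P. Qed.

Hypotheses (tr_sym : symmetric tr) (tr_acyclic : acyclic tr).

Lemma acyclic_disjoint_paths x c p q :
  tree_path x c (rcons p c) -> tree_path x c (rcons q c) ->
  ~~ has (mem q) p -> (0 < size p + size q)%N -> False.
Proof.
move=> /and3P[pP pU _] /and3P[qP qU _] pq_disj pq_nil.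
have /and3P[cxp xp pU'] : [&& c \notin x :: p, x \notin p & uniq p].
  by move: pU; rewrite -rcons_cons rcons_uniq cons_uniq.
have /and3P[cxq xq qU'] : [&& c \notin x :: q, x \notin q & uniq q].
  by move: qU; rewrite -rcons_cons rcons_uniq cons_uniq.
move: cxp cxq; rewrite !in_cons => /norP[cx cp] /norP[_ cq].
(* the cycle c, rev q, x, p, closed by the last edge of rcons p c *)
apply: (negP (@tr_acyclic c (rcons (rev q) x ++ p) _ _ _)).
- by rewrite size_cat size_rcons size_rev addSn ltnS addnC.
- rewrite cat_path last_rcons; move: pP; rewrite rcons_path => /andP[-> _].
  rewrite andbT -rev_cons -(belast_rcons x q c).
  rewrite (eq_path (e' := fun u v => tr v u)) => [|u v]; last exact: tr_sym.
  by rewrite -{1}(last_rcons x q c) rev_path.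
- rewrite cons_uniq mem_cat mem_rcons !in_cons mem_rev (negbTE cx) (negbTE cq).
  rewrite (negbTE cp) cat_uniq rcons_uniq mem_rev xq rev_uniq qU' pU' /=.
  rewrite andbT; apply/hasPn => z zp.
  rewrite /= mem_rcons in_cons mem_rev negb_or (hasPn pq_disj) // andbT.
  by apply: contraNneq xp => <-.
- by rewrite last_cat last_rcons; move: pP; rewrite rcons_path => /andP[_ ->].
Qed.

Lemma tree_path_unique x y p q : tree_path x y p -> tree_path x y q -> p = q.
Proof.
elim: p x q => [|a p IHp] x [|b q] //.
- case/and3P=> _ _ /= /eqP <- /and3P[_ /andP[/negP xbq _] /eqP lq].
  by case: xbq; rewrite -lq /= mem_last.
- case/and3P=> _ /andP[/negP xap _] /eqP lp /and3P[_ _ /= /eqP lq].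
  by case: xap; rewrite lq -lp /= mem_last.
case: (eqVneq a b) => [<- hp hq|ab hp hq].
  by rewrite (IHp a q (tree_path_cons hp) (tree_path_cons hq)).
have yp : y \in a :: p by case/and3P: hp => _ _ /eqP <-; exact: (mem_last a p).
have yq : y \in b :: q by case/and3P: hq => _ _ /eqP <-; exact: (mem_last b q).
have meet : has (mem (b :: q)) (a :: p) by apply/hasP; exists y.
(* [a != b] is kept as [heads] since the two lists are generalized below *)
have heads : head x (a :: p) != head x (b :: q) by [].
exfalso; move: (a :: p) (b :: q) meet heads hp hq => {IHp ab yp yq} s t.
case/split_find => c s1 s2 ct s1t; move: s1t.
case/path.splitP: ct => t1 t2 s1t heads hs ht.
apply: (@acyclic_disjoint_paths x c s1 t1).
- by have := tree_path_prefix hs; rewrite last_rcons.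
- by have := tree_path_prefix ht; rewrite last_rcons.
- apply: contra s1t; apply: sub_has => z zt.
  by rewrite [mem _ z]mem_cat mem_rcons in_cons [z \in t1]zt orbT.
- by case: s1 {s1t hs} heads => [|? ?]; case: t1 {ht} => [|? ?] //=; rewrite eqxx.
Qed.

Hypotheses (tr_irr : irreflexive tr) (tr_connected : connected_graph tr).
Variable r : 'I_n.

Definition root_path (v : 'I_n) : seq 'I_n :=
  xchoose (connect_tree_path (tr_connected r v)).

Lemma root_pathP v : tree_path r v (root_path v).
Proof. exact: xchooseP. Qed.

Lemma root_path_unique v p : tree_path r v p -> p = root_path v.
Proof. by move/tree_path_unique; apply; apply: root_pathP. Qed.

Lemma root_path_root : root_path r = [::].
Proof. by rewrite -(@root_path_unique r [::]) //; apply/tree_pathP. Qed.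

Lemma root_path_rcons u v :
  tr u v -> v \notin r :: root_path u -> root_path v = rcons (root_path u) v.
Proof.
move=> uv vu; have /tree_pathP[uP uU uL] := root_pathP u.
symmetry; apply: root_path_unique; apply/tree_pathP.
by rewrite rcons_path uP uL uv -rcons_cons rcons_uniq vu uU last_rcons.
Qed.

Lemma root_path_prefix u v :
  v \in r :: root_path u -> exists s, root_path u = root_path v ++ s.
Proof.
rewrite in_cons => /predU1P[->|]; first by exists (root_path u); rewrite root_path_root.
move=> vu; have := root_pathP u; case/path.splitP: vu => p s up.
exists s; congr (_ ++ _); apply: root_path_unique.
by have := tree_path_prefix up; rewrite last_rcons.
Qed.

Lemma root_path_edge u v : tr u v ->
  root_path v = rcons (root_path u) v \/ root_path u = rcons (root_path v) u.
Proof.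
move=> uv; have [vu|] := boolP (v \in r :: root_path u); last first.
  by left; apply: root_path_rcons.
have [uv'|] := boolP (u \in r :: root_path v); last first.
  by right; apply: root_path_rcons; rewrite // tr_sym.
have [s Eu] := root_path_prefix vu; have [t Ev] := root_path_prefix uv'.
have s0 : s = [::].
  by apply: size0nil; have := congr1 size Eu; rewrite Ev !size_cat; lia.
have /tree_pathP[_ _ lu] := root_pathP u; have /tree_pathP[_ _ lv] := root_pathP v.
have uv_eq : u = v by rewrite -lu -lv Eu s0 cats0.
by move: uv; rewrite uv_eq tr_irr.
Qed.

End TreePaths.

Lemma char_poly_conj (F : comNzRingType) m (A D D' : 'M[F]_m) :
  D' *m D = 1%:M -> char_poly (D' *m A *m D) = char_poly A.
Proof.
move=> DD'; rewrite /char_poly /char_poly_mx !map_mxM.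
set mD := map_mx _ D; set mD' := map_mx _ D'; set mA := map_mx _ A.
have mDD' : mD' *m mD = 1%:M by rewrite -map_mxM DD' map_mx1.
have -> : 'X%:M - mD' *m mA *m mD = mD' *m ('X%:M - mA) *m mD.
  by rewrite mulmxBr mulmxBl mul_mx_scalar -scalemxAl mDD' scalemx1.
by rewrite !det_mulmx mulrAC -det_mulmx mDD' det1 mul1r.
Qed.

Section Switching.
Variables (R : realType) (n : nat).
Implicit Types (e : rel 'I_n) (phi : 'I_n -> 'I_n -> R[i]) (d : 'I_n -> R[i]).

Lemma walk_gain_rcons phi x p y :
  walk_gain phi x (rcons p y) = walk_gain phi x p * phi (last x p) y.
Proof. by elim: p x => [|a p IHp] x /=; rewrite ?mul1r ?mulr1 // IHp mulrA. Qed.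

Lemma T_gain_neq0 e phi s t : T_gain e phi -> e s t -> phi s t != 0.
Proof. by move=> phiT /phiT[norm1 _]; rewrite -normr_eq0 norm1 oner_eq0. Qed.

Lemma walk_gain_neq0 e phi x p :
  T_gain e phi -> path e x p -> walk_gain phi x p != 0.
Proof.
move=> phiT; elim: p x => [|a p IHp] x /=; first by rewrite oner_eq0.
by case/andP=> xa ap; rewrite mulf_neq0 ?IHp ?(T_gain_neq0 phiT).
Qed.

Definition switching e phi1 phi2 d : Prop :=
  forall s t, e s t -> phi2 s t * d s = phi1 s t * d t.

Lemma switching_sym e phi1 phi2 d s t :
  T_gain e phi1 -> T_gain e phi2 -> e s t ->
  phi2 t s * d t = phi1 t s * d s -> phi2 s t * d s = phi1 s t * d t.
Proof.
move=> phi1T phi2T st; have [_ ->] := phi1T _ _ st; have [_ ->] := phi2T _ _ st.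
have nz1 := T_gain_neq0 phi1T st; have nz2 := T_gain_neq0 phi2T st.
move=> E; have -> : d s = phi1 s t * ((phi2 s t)^-1 * d t) by rewrite E mulVKf.
by rewrite mulrCA mulVKf.
Qed.

Lemma switching_walk_gain e phi1 phi2 d x p : switching e phi1 phi2 d ->
  path e x p -> walk_gain phi2 x p * d x = walk_gain phi1 x p * d (last x p).
Proof.
move=> sw; elim: p x => [|a p IHp] x /=; first by rewrite !mul1r.
by case/andP=> xa ap; rewrite mulrAC sw // -!mulrA -IHp // [d a * _]mulrC.
Qed.

Lemma gain_adj_switching e phi1 phi2 d :
  (forall v, d v != 0) -> switching e phi1 phi2 d ->
  gain_adj e phi2 = diag_mx (\row_v (d v)^-1) *m gain_adj e phi1 *m diag_mx (\row_v d v).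
Proof.
move=> dnz sw; apply/matrixP => s t; rewrite mul_mx_diag mul_diag_mx !mxE.
case: ifP => st; last by rewrite mulr0 mul0r.
by rewrite -mulrA -sw // mulrCA mulVf // mulr1.
Qed.

Lemma char_poly_switching e phi1 phi2 d :
  (forall v, d v != 0) -> switching e phi1 phi2 d ->
  char_poly (gain_adj e phi1) = char_poly (gain_adj e phi2).
Proof.
move=> dnz sw; rewrite (gain_adj_switching dnz sw) char_poly_conj //.
by rewrite mulmx_diag; apply/matrixP => s t; rewrite !mxE mulVf.
Qed.

End Switching.

Section TreePotential.
Variables (R : realType) (n : nat) (e tr : rel 'I_n) (r : 'I_n).
Variables phi1 phi2 : 'I_n -> 'I_n -> R[i].
Hypotheses (phi1_gain : T_gain e phi1) (phi2_gain : T_gain e phi2).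
Hypotheses (tr_sub : subrel tr e) (tr_sym : symmetric tr) (tr_acyclic : acyclic tr).
Hypotheses (tr_irr : irreflexive tr) (tr_connected : connected_graph tr).

Local Notation root_path := (root_path tr_connected r).

Definition potential (v : 'I_n) : R[i] :=
  walk_gain phi2 r (root_path v) / walk_gain phi1 r (root_path v).

Lemma path_root_path v : path e r (root_path v).
Proof. by case/tree_pathP: (root_pathP tr_connected r v) => /(sub_path tr_sub). Qed.

Lemma potential_neq0 v : potential v != 0.
Proof.
by rewrite mulf_neq0 ?invr_eq0 ?(walk_gain_neq0 _ (path_root_path v)).
Qed.

Lemma potential_tree_step u v : tr u v ->
  root_path v = rcons (root_path u) v -> phi2 u v * potential u = phi1 u v * potential v.
Proof.
move=> uv E; have /tree_pathP[_ _ lu] := root_pathP tr_connected r u.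
rewrite /potential E !walk_gain_rcons lu.
have nz1 := walk_gain_neq0 phi1_gain (path_root_path u).
have nz2 := T_gain_neq0 phi1_gain (tr_sub uv).
by field; rewrite nz1 nz2.
Qed.

Lemma switching_potential_tree : switching tr phi1 phi2 potential.
Proof.
move=> u v uv; have [E|E] := root_path_edge tr_sym tr_acyclic tr_irr tr_connected r uv.
  exact: potential_tree_step.
apply: (switching_sym phi1_gain phi2_gain (tr_sub uv)).
by apply: potential_tree_step; rewrite // tr_sym.
Qed.

Hypothesis fund_cycle_eq : forall (s t : 'I_n) (p : seq 'I_n),
  e s t -> ~~ tr s t -> tree_le tr r s t ->
  path tr s p -> uniq (s :: p) -> last s p = t ->
  fund_cycle_gain phi1 s t p = fund_cycle_gain phi2 s t p.

Lemma potential_nontree_edge s t : e s t -> ~~ tr s t -> tree_le tr r s t ->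
  phi2 t s * potential t = phi1 t s * potential s.
Proof.
move=> st nst le_st.
have [p /tree_pathP[pP pU pL]] := connect_tree_path (tr_connected s t).
have cycle_eq := fund_cycle_eq st nst le_st pP pU pL; rewrite /fund_cycle_gain in cycle_eq.
have walk_eq := switching_walk_gain switching_potential_tree pP; rewrite pL in walk_eq.
apply: (mulfI (walk_gain_neq0 phi2_gain (sub_path tr_sub pP))).
by rewrite mulrA -cycle_eq mulrAC -walk_eq mulrAC -mulrA.
Qed.

Lemma switching_potential :
  symmetric e -> normal_tree e tr r -> switching e phi1 phi2 potential.
Proof.
move=> e_sym tr_normal s t st; have [uv|nst] := boolP (tr s t).
  exact: switching_potential_tree.
case: (tr_normal s t st) => [le_st|le_ts].
  by apply: (switching_sym phi1_gain phi2_gain st); apply: potential_nontree_edge.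
by apply: potential_nontree_edge; rewrite // (e_sym, tr_sym).
Qed.

End TreePotential.

Theorem theorem3p2 (R : realType) (n : nat) (e : rel 'I_n)
  (phi1 phi2 : 'I_n -> 'I_n -> R[i]) (tr : rel 'I_n) (r : 'I_n) :
  simple_graph e -> connected_graph e ->
  T_gain e phi1 -> T_gain e phi2 ->
  spanning_tree e tr -> normal_tree e tr r ->
  (* equal gains on all fundamental cycles: for every non-tree edge
     {v_s, v_t} with v_s <= v_t and the tree path p from v_s to v_t *)
  (forall (s t : 'I_n) (p : seq 'I_n),
      e s t -> ~~ tr s t -> tree_le tr r s t ->
      path tr s p -> uniq (s :: p) -> last s p = t ->
      fund_cycle_gain phi1 s t p = fund_cycle_gain phi2 s t p) ->
  char_poly (gain_adj e phi1) = char_poly (gain_adj e phi2).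
Proof.
move=> [e_irr e_sym] _ phi1_gain phi2_gain [tr_sym [tr_sub [tr_conn tr_acyc]]].
move=> tr_normal fund_eq.
have tr_irr : irreflexive tr by move=> u; apply/negbTE/negP => /tr_sub; rewrite e_irr.
apply: (char_poly_switching (potential_neq0 r phi1_gain phi2_gain tr_sub tr_conn)).
exact: (switching_potential phi1_gain phi2_gain tr_sub tr_sym tr_acyc tr_irr
  tr_conn fund_eq e_sym tr_normal).
Qed.
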